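(* Let $G$ be a nice graph, $V_4$ the set of vertices of degree at least four in $G$, $\mathcal{P}$ a path partition of $G$ of minimum size, and $\mathcal{P}_4\subseteq\mathcal{P}$ the subfamily of paths that visit at least one vertex of $V_4$. Then $\mathcal{P}_4$ is bull-free.
   Context: All graphs are finite, simple and undirected; subcubic means maximum degree at most $3$. A path partition of $G$ is a collection of pairwise edge-disjoint paths whose edge sets together cover $E(G)$. A pan cycle of $G$ is a cycle containing a unique vertex of degree $3$ in $G$, all its other vertices having degree $2$ in $G$. A bull cycle of $G$ is a cycle containing exactly two vertices of degree $3$ in $G$, all its other vertices having degree $2$ in $G$. A graph is nice if it is connected, not subcubic, has no pan cycles, and all its bull cycles are triangles. A bull triangle is a bull cycle of length three; its two degree-$3$ vertices form a bull-pair. A path is bull-free if its two endpoints do not form a bull-pair; a family of paths is bull-free if each of its paths is. *)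

(* Simple graphs: symmetric irreflexive relation g on a finType T. *)
From mathcomp Require Import all_boot.
Set Implicit Arguments. Unset Strict Implicit. Unset Printing Implicit Defensive.

Section Graphs.
Variables (T : finType) (g : rel T).

Definition deg (x : T) : nat := #|[set y | g x y]|.

Definition is_gpath (p : seq T) : bool :=
  [&& uniq p, 1 < size p & (if p is x :: q then path g x q else false)].

Definition pedges (p : seq T) : seq {set T} :=
  [seq [set xy.1; xy.2] | xy <- zip p (behead p)].

Definition is_path_partition (P : seq (seq T)) : Prop :=
  [/\ (forall p, p \in P -> is_gpath p),
      (forall i j, i < size P -> j < size P -> i != j ->
         forall ed, ed \in pedges (nth [::] P i) -> ed \notin pedges (nth [::] P j))
    & (forall x y, g x y -> exists2 p, p \in P & [set x; y] \in pedges p)].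

Definition min_path_partition (P : seq (seq T)) : Prop :=
  is_path_partition P /\ forall Q, is_path_partition Q -> size P <= size Q.

Definition is_gcycle (c : seq T) : bool :=
  [&& uniq c, 2 < size c & cycle g c].

Definition pan_cycle (c : seq T) : Prop :=
  [/\ is_gcycle c, #|[set x | (x \in c) && (deg x == 3)]| = 1
    & forall x, x \in c -> (deg x == 2) || (deg x == 3)].

Definition bull_cycle (c : seq T) : Prop :=
  [/\ is_gcycle c, #|[set x | (x \in c) && (deg x == 3)]| = 2
    & forall x, x \in c -> (deg x == 2) || (deg x == 3)].

Definition bull_pair (u v : T) : Prop :=
  exists c, [/\ bull_cycle c, size c = 3, u != v,
               (u \in c) && (deg u == 3) & (v \in c) && (deg v == 3)].

Definition bull_free_path (p : seq T) : Prop :=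
  if p is x :: q then ~ bull_pair x (last x q) else True.

Definition nice : Prop :=
  [/\ forall x y, connect g x y,
      exists x, 4 <= deg x,
      forall c, ~ pan_cycle c
    & forall c, bull_cycle c -> size c = 3].

End Graphs.

From mathcomp Require Import all_boot.
Set Implicit Arguments. Unset Strict Implicit. Unset Printing Implicit Defensive.

(** Let [p] be a path of a minimum path partition [P] running from [u] to [v],
   where [u v w] is a bull triangle ([deg u = deg v = 3], [deg w = 2]), and let
   [p] pass through a vertex of degree at least 4. That vertex is interior, so
   [p] has at least three vertices; hence [w] is not on [p] (its only
   neighbours are the endpoints) and [uv] is not an edge of [p]. Thus the only
   edges leaving the triangle are the two end edges of [p], so every other
   path of [P] meeting the triangle stays inside it and has at most two edges;
   as the three triangle edges must be covered, there are at least two such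
   paths. Replacing [p] and these paths by [w p] and [u v w] yields a smaller
   path partition. *)

Section PathEdges.
Variable T : finType.
Implicit Types (x y z : T) (q s : seq T) (e : rel T).

Lemma pedges_cons2 x y q : pedges [:: x, y & q] = [set x; y] :: pedges (y :: q).
Proof. by []. Qed.

Lemma size_pedges q : size (pedges q) = (size q).-1.
Proof. by rewrite size_map size_zip size_behead; apply/minn_idPr/leq_pred. Qed.

Lemma mem_pedges q f x : f \in pedges q -> x \in f -> x \in q.
Proof.
case: q => // y q; elim: q y => // z q IH y.
rewrite pedges_cons2 inE => /predU1P[-> /set2P[]-> | /IH fq /fq xq].
- exact: mem_head.
- by rewrite !inE eqxx orbT.
- by rewrite inE xq orbT.
Qed.

Lemma mem_pedges_last s x y : [set x; y] \in pedges (rcons (rcons s x) y).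
Proof.
elim: s => [|z s IH] /=; first by rewrite mem_head.
by case: (rcons (rcons s x) y) IH => [|h t] // IH; rewrite pedges_cons2 inE IH orbT.
Qed.

Lemma mem_pedges_rel e x q f : path e x q -> f \in pedges (x :: q) ->
  exists y z, f = [set y; z] /\ e y z.
Proof.
elim: q x => [|y q IH] x //= /andP[exy eq]; rewrite pedges_cons2 inE.
by case/predU1P=> [->| /(IH _ eq)//]; exists x, y.
Qed.

Lemma path_pedgesI e (A : pred {set T}) x q :
  path e x q -> {subset pedges (x :: q) <= A} ->
  path [rel y z | e y z && ([set y; z] \in A)] x q.
Proof.
elim: q x => [|y q IH] x //= /andP[exy eq] qA.
rewrite exy qA ?pedges_cons2 ?mem_head //= IH // => f fq.
by apply: qA; rewrite pedges_cons2 inE fq orbT.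
Qed.

Lemma path_mem_nbr e x q z : symmetric e -> path e x q -> q != [::] ->
  z \in x :: q -> exists2 y, y \in x :: q & e z y.
Proof.
move=> esym; elim: q x => [|y q IH] x // /andP[exy eq] _.
rewrite inE => /predU1P[->|]; first by exists y; rewrite // !inE eqxx orbT.
case: q IH eq => [_ _ | y' q IH eq zq].
  by rewrite inE => /eqP->; exists x; rewrite ?mem_head // esym.
by have [y'' yq ezy] := IH y eq isT zq; exists y''; rewrite // inE yq orbT.
Qed.

End PathEdges.

Section Graph.
Variables (T : finType) (g : rel T).
Implicit Types (x y : T) (q r : seq T) (P R : seq (seq T)).

Lemma deg_nbr_mem x s y :
  uniq s -> all (g x) s -> deg g x <= size s -> g x y -> y \in s.
Proof.
move=> s_uniq s_nbr s_deg gxy.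
have /eqP s_nbrs : [set z in s] == [set z | g x z].
  rewrite eqEcard; have -> : #|[set z in s]| = size s by rewrite cardsE; apply/card_uniqP.
  rewrite s_deg andbT.
  by apply/subsetP => z; rewrite !inE => /(allP s_nbr).
have : y \in [set z | g x z] by rewrite inE.
by rewrite -s_nbrs inE.
Qed.

Lemma gpath_edge q : is_gpath g q -> exists f, f \in pedges q.
Proof.
by case/and3P=> _; case: q => [|x [|y q]] // _ _; exists [set x; y]; rewrite mem_head.
Qed.

Definition edge_disjoint q1 q2 : Prop :=
  forall f, f \in pedges q1 -> f \notin pedges q2.

Lemma edge_disjoint_sym q1 q2 : edge_disjoint q1 q2 -> edge_disjoint q2 q1.
Proof. by move=> d12 f f2; apply: contraL f2; apply: d12. Qed.

Lemma path_partition_gpath P q : is_path_partition g P -> q \in P -> is_gpath g q.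
Proof. by case=> Pg _ _; apply: Pg. Qed.

Lemma path_partition_uniq P : is_path_partition g P -> uniq P.
Proof.
case=> Pg Pdisj _; apply/(uniqPn [::]) => -[i [j [ij jP Pij]]].
have iP := ltn_trans ij jP.
have [f fi] := gpath_edge (Pg _ (mem_nth [::] iP)).
by have := Pdisj i j iP jP (negbT (ltn_eqF ij)) f fi; rewrite -Pij fi.
Qed.

Lemma path_partition_disjoint P q1 q2 : is_path_partition g P ->
  q1 \in P -> q2 \in P -> q1 != q2 -> edge_disjoint q1 q2.
Proof.
case=> _ Pdisj _ q1P q2P n12 f.
have := Pdisj (index q1 P) (index q2 P); rewrite !index_mem !nth_index //.
by apply=> //; apply: contra n12 => /eqP/(congr1 (nth [::] P)); rewrite !nth_index // => ->.
Qed.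

Lemma path_partitionI P :
  {in P, forall q, is_gpath g q} -> uniq P ->
  {in P &, forall q1 q2, q1 != q2 -> edge_disjoint q1 q2} ->
  (forall x y, g x y -> exists2 q, q \in P & [set x; y] \in pedges q) ->
  is_path_partition g P.
Proof.
move=> Pg Puniq Pdisj Pcover; split=> // i j iP jP ij.
by apply: Pdisj; rewrite ?mem_nth ?nth_uniq.
Qed.

Lemma path_partition_exchange P R (keep : pred (seq T)) :
  is_path_partition g P ->
  {in R, forall r, is_gpath g r} -> uniq R ->
  {in R &, forall r1 r2, r1 != r2 -> edge_disjoint r1 r2} ->
  (forall r q, r \in R -> q \in P -> keep q -> edge_disjoint r q) ->
  (forall q f, q \in P -> ~~ keep q -> f \in pedges q ->
     exists2 r, r \in R & f \in pedges r) ->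
  is_path_partition g (R ++ filter keep P).
Proof.
move=> PP Rg Runiq Rdisj RPdisj Rcover; have [Pg _ Pcover] := PP.
apply: path_partitionI.
- by move=> q; rewrite mem_cat mem_filter => /orP[/Rg | /andP[_ /Pg]].
- rewrite cat_uniq Runiq filter_uniq ?(path_partition_uniq PP) // andbT.
  apply/hasPn => q; rewrite mem_filter => /andP[kq qP]; apply/negP => qR.
  have [f fq] := gpath_edge (Rg q qR).
  by have := RPdisj q q qR qP kq f fq; rewrite fq.
- move=> q1 q2; rewrite !mem_cat !mem_filter.
  case/orP=> [q1R | /andP[k1 q1P]] /orP[q2R | /andP[k2 q2P]] n12.
  + exact: Rdisj.
  + exact: RPdisj.
  + exact/edge_disjoint_sym/RPdisj.
  + exact: path_partition_disjoint PP _ _ n12.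
- move=> x y /Pcover[q qP fq]; have [kq | nkq] := boolP (keep q).
    by exists q; rewrite // mem_cat mem_filter kq qP orbT.
  by have [r rR fr] := Rcover q _ qP nkq fq; exists r; rewrite // mem_cat rR.
Qed.

Lemma bull_pair_triangle u v : symmetric g -> bull_pair g u v -> exists w,
  [/\ [/\ u != v, u != w & v != w], [/\ g u v, g u w & g v w]
    & [/\ deg g u = 3, deg g v = 3 & deg g w = 2]].
Proof.
move=> gs [c [[/and3P[c_uniq _ c_cycle] deg3_card c_deg] c3 nuv]].
move=> /andP[uc /eqP du] /andP[vc /eqP dv].
have adj y z : y \in c -> z \in c -> y != z -> g y z.
  case: c c3 c_cycle {c_uniq deg3_card c_deg uc vc} => [|a [|b [|d []]]] //= _.
  rewrite !andbT => /and3P[gab gbd gda].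
  by rewrite !inE => /or3P[]/eqP-> /or3P[]/eqP->; rewrite ?eqxx // => _; rewrite // gs.
have /hasP[w wc] : has [predC [:: u; v]] c.
  apply/negPn/negP => /hasPn c_uv.
  have := uniq_leq_size c_uniq (fun y yc => negbNE (c_uv y yc)).
  by rewrite c3.
rewrite !inE negb_or eq_sym [w == v]eq_sym => /andP[nuw nvw].
have dw : deg g w = 2.
  have uvw_uniq : uniq [:: u; v; w] by rewrite /= !inE negb_or nuv nuw nvw.
  case/orP: (c_deg w wc) => /eqP // dw.
  suff : #|[:: u; v; w]| <= 2 by rewrite (card_uniqP uvw_uniq).
  rewrite -deg3_card; apply: subset_leq_card.
  by apply/subsetP => y; rewrite !inE => /or3P[]/eqP->; rewrite ?uc ?vc ?wc ?du ?dv ?dw.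
exists w; split=> //.
by split; apply: adj; rewrite // eq_sym.
Qed.

End Graph.

Section BullPath.
Variables (T : finType) (g : rel T).
Hypotheses (gs : symmetric g) (gi : irreflexive g).
Variables (u v w : T) (I : seq T).
Hypotheses (nuv : u != v) (nuw : u != w) (nvw : v != w).
Hypotheses (guv : g u v) (guw : g u w) (gvw : g v w).
Hypotheses (du : deg g u = 3) (dv : deg g v = 3) (dw : deg g w = 2).
Local Notation p := (u :: rcons I v).
Local Notation S := [:: u; v; w].

Lemma triangle_gpath : is_gpath g S.
Proof. by rewrite /is_gpath /= !inE !negb_or nuv nuw nvw guv gvw. Qed.

Lemma triangle_edges_uniq : uniq (pedges (w :: S)).
Proof.
have neq (a b c d y : T) :
    y \notin [set a; b] -> y \in [set c; d] -> [set a; b] != [set c; d].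
  by move=> yab ycd; apply: contraNneq yab => ->.
have v_wu : v \notin [set w; u].
  by apply/set2P => -[vw | vu]; [move: nvw | move: nuv]; rewrite ?vw ?vu eqxx.
have w_uv : w \notin [set u; v].
  by apply/set2P => -[wu | wv]; [move: nuw | move: nvw]; rewrite ?wu ?wv eqxx.
rewrite !pedges_cons2 /= !inE !negb_or !andbT -andbA.
apply/and3P; split; [apply: (neq _ _ _ _ v) | apply: (neq _ _ _ _ v) | apply: (neq _ _ _ _ w)];
  by rewrite ?set21 ?set22.
Qed.

Lemma triangle_edge_cases y z :
  y \in S -> z \in S -> y != z -> [set y; z] \in pedges (w :: S).
Proof.
have set2C (a b : T) : [set a; b] = [set b; a] := setUC _ _.
rewrite !pedges_cons2 !inE => /or3P[]/eqP-> /or3P[]/eqP->; rewrite ?eqxx // => _;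
  by rewrite ?(set2C v u) ?(set2C u w) ?(set2C w v) ?eqxx ?orbT.
Qed.

Lemma nbr_w y : g w y -> y \in [:: u; v].
Proof.
by move=> gwy; apply: (deg_nbr_mem _ _ _ gwy); rewrite /= ?inE ?nuv ?dw // !(gs w) guw gvw.
Qed.

Hypothesis gp : is_gpath g p.
Variable x : T.
Hypotheses (xp : x \in p) (dx : 4 <= deg g x).

Lemma ends_notin_interior : (u \notin I) && (v \notin I).
Proof.
case/and3P: gp; rewrite cons_uniq rcons_uniq mem_rcons inE negb_or.
by case/and3P=> /andP[_ ->] ->.
Qed.

Lemma interior_path : path g u I && g (last u I) v.
Proof. by case/and3P: gp => _ _; rewrite rcons_path. Qed.

Lemma mem_interior : x \in I.
Proof.
move: xp; rewrite inE mem_rcons inE => /or3P[]// /eqP xuv.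
  by move: dx; rewrite xuv du.
by move: dx; rewrite xuv dv.
Qed.

Lemma w_notin_path : w \notin p.
Proof.
have /andP[uI vI] := ends_notin_interior.
apply/negP; rewrite inE mem_rcons inE => /or3P[/eqP wu | /eqP wv | wI].
- by move: nuw; rewrite wu eqxx.
- by move: nvw; rewrite wv eqxx.
case: I wI mem_interior interior_path uI vI => [|h [|h' t]] // wI.
  by move: wI; rewrite !inE => /eqP<- /eqP xw; move: dx; rewrite xw dw.
move=> _ /andP[/andP[_ ph] _] uI vI.
have [y yI /nbr_w] := @path_mem_nbr _ g h (h' :: t) w gs ph isT wI.
by rewrite !inE => /orP[]/eqP yuv; [move: uI | move: vI]; rewrite -yuv yI.
Qed.

Lemma w_edge_notin_path (f : {set T}) : w \in f -> f \notin pedges p.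
Proof. by move=> wf; apply: contra w_notin_path => /mem_pedges; apply. Qed.

Lemma first_edge : exists2 a, a \in I & g u a && ([set u; a] \in pedges p).
Proof.
case: I mem_interior interior_path => [|a t] // _ /andP[/andP[gua _] _].
by exists a; rewrite ?mem_head // gua.
Qed.

Lemma last_edge : exists2 b, b \in I & g v b && ([set v; b] \in pedges p).
Proof.
case/lastP: I mem_interior interior_path => [|t b] // _ /andP[_].
rewrite last_rcons => gbv; exists b; rewrite ?mem_rcons ?mem_head // gs gbv setUC.
exact: (mem_pedges_last (u :: t)).
Qed.

Lemma uv_notin_path : [set u; v] \notin pedges p.
Proof.
have /andP[uI vI] := ends_notin_interior.
case: I mem_interior uI vI => [|a t] // _ uI vI; rewrite rcons_cons pedges_cons2 inE negb_or.
apply/andP; split.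
  apply/negP => /eqP uv_ua; have : v \in [set u; a] by rewrite -uv_ua set22.
  by rewrite !inE (eq_sym v u) (negbTE nuv) => /eqP va; rewrite va mem_head in vI.
apply: contra uI => /mem_pedges/(_ (set21 u v)).
by rewrite -rcons_cons mem_rcons inE (negbTE nuv).
Qed.

Lemma off_path_nbr_in_triangle y z :
  g y z -> [set y; z] \notin pedges p -> y \in S -> z \in S.
Proof.
have wI : w \notin I.
  by apply: contra w_notin_path; rewrite inE mem_rcons inE => ->; rewrite !orbT.
have /andP[uI vI] := ends_notin_interior.
move=> gyz yz_p yS; have {yS} : [|| y == u, y == v | y == w] by rewrite !inE in yS.
case/or3P=> /eqP y_uvw; rewrite {y}y_uvw in gyz yz_p.
- have [a aI /andP[gua ua_p]] := first_edge.
  have va : v != a by apply: contraNneq vI => ->.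
  have wa : w != a by apply: contraNneq wI => ->.
  have : z \in [:: v; w; a].
    apply: (deg_nbr_mem _ _ _ gyz); rewrite /= ?guv ?guw ?gua ?du //.
    by rewrite !inE negb_or nvw va wa.
  rewrite !inE => /or3P[]/eqP z_vwa; rewrite z_vwa ?mem_head ?inE ?eqxx ?orbT //.
  by rewrite z_vwa ua_p in yz_p.
- have [b bI /andP[gvb vb_p]] := last_edge.
  have ub : u != b by apply: contraNneq uI => ->.
  have wb : w != b by apply: contraNneq wI => ->.
  have : z \in [:: u; w; b].
    apply: (deg_nbr_mem _ _ _ gyz); rewrite /= -?(gs u) ?guv ?gvw ?gvb ?dv //.
    by rewrite !inE negb_or nuw ub wb.
  rewrite !inE => /or3P[]/eqP z_uwb; rewrite z_uwb ?mem_head ?inE ?eqxx ?orbT //.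
  by rewrite z_uwb vb_p in yz_p.
- by move/nbr_w: gyz; rewrite !inE => /orP[]/eqP->; rewrite ?eqxx ?orbT.
Qed.

Lemma off_path_edge_mem_triangle y z :
  g y z -> [set y; z] \notin pedges p -> (y \in S) = (z \in S).
Proof.
move=> gyz yz_p; apply/idP/idP; first exact: off_path_nbr_in_triangle.
by apply: off_path_nbr_in_triangle; rewrite 1?gs // setUC.
Qed.

Lemma extended_path_gpath : is_gpath g (w :: p).
Proof.
case/and3P: gp => p_uniq _ p_path.
by rewrite /is_gpath cons_uniq w_notin_path p_uniq /= -(gs u) guw.
Qed.

Lemma extended_path_triangle_disjoint : edge_disjoint (w :: p) S.
Proof.
move=> f; rewrite pedges_cons2 inE => /predU1P[-> | fp].
  by have := triangle_edges_uniq; rewrite pedges_cons2 cons_uniq => /andP[].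
apply: contraL fp; rewrite !pedges_cons2 !inE => /orP[]/eqP->.
  exact: uv_notin_path.
by apply: w_edge_notin_path; rewrite set22.
Qed.

Variable P : seq (seq T).
Hypotheses (PP : is_path_partition g P) (pP : p \in P).

Lemma path_meeting_triangle_sub q :
  q \in P -> q != p -> has (mem S) q -> {subset q <= S}.
Proof.
move=> qP nqp.
have qp_disj := path_partition_disjoint PP qP pP nqp.
case: q qP nqp qp_disj (path_partition_gpath PP qP) => [|h t] //.
move=> _ _ qp_disj /and3P[_ _ ht].
have : path [rel y z | (y \in S) == (z \in S)] h t.
  apply: sub_path (path_pedgesI ht (fun f fq => qp_disj f fq)) => y z /andP[gyz yz_p].
  exact/eqP/off_path_edge_mem_triangle.
have S_trans : transitive [rel y z | (y \in S) == (z \in S)].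
  by move=> ? ? ? /= /eqP-> /eqP->.
move/(order_path_min S_trans)/allP => h_t /hasP[z zq zS].
have hS : h \in S by case/predU1P: zq => [<- // | /h_t/eqP->].
by move=> y; rewrite inE => /predU1P[-> // | /h_t/eqP <-].
Qed.

Lemma path_meeting_triangle_size q :
  q \in P -> q != p -> has (mem S) q -> size (pedges q) <= 2.
Proof.
move=> qP nqp qS; have /and3P[q_uniq _ _] := path_partition_gpath PP qP.
rewrite size_pedges -subn1 leq_subLR.
exact: uniq_leq_size (path_meeting_triangle_sub qP nqp qS).
Qed.

Lemma count_paths_meeting_triangle : 3 <= count (has (mem S)) P.
Proof.
have [_ _ Pcover] := PP.
have cover y z : g y z -> y \in S -> [set y; z] \notin pedges p -> exists2 q,
    [&& q \in P, q != p & has (mem S) q] & [set y; z] \in pedges q.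
  move=> gyz yS yz_p; have [q qP yz_q] := Pcover _ _ gyz; exists q => //.
  rewrite qP /=; apply/andP; split; first by apply: contraNneq yz_p => <-.
  by apply/hasP; exists y; rewrite // (mem_pedges yz_q (set21 y z)).
have vS : v \in S by rewrite !inE eqxx orbT.
have wS : w \in S by rewrite !inE eqxx !orbT.
have [q1 /and3P[q1P nq1p q1S] e1] :=
  cover w u (etrans (gs w u) guw) wS (w_edge_notin_path (set21 w u)).
have [q2 /and3P[q2P nq2p q2S] e2] := cover u v guv (mem_head _ _) uv_notin_path.
have [q3 /and3P[q3P nq3p q3S] e3] := cover v w gvw vS (w_edge_notin_path (set22 v w)).
have not_all_eq : ~~ ((q1 == q2) && (q1 == q3)).
  apply/negP => /andP[/eqP q12 /eqP q13].
  suff : 3 <= size (pedges q1) by rewrite leqNgt ltnS path_meeting_triangle_size.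
  apply: uniq_leq_size triangle_edges_uniq _ => f.
  by rewrite !pedges_cons2 !inE => /or3P[]/eqP->; [| rewrite q12 | rewrite q13].
have [qa [qb [qaP qbP qab [nqap nqbp] [qaS qbS]]]] : exists qa qb,
    [/\ qa \in P, qb \in P, qa != qb, qa != p /\ qb != p
      & has (mem S) qa /\ has (mem S) qb].
  case: (eqVneq q1 q2) not_all_eq => [_ /= n13 | n12 _]; first by exists q1, q3.
  by exists q1, q2.
rewrite -size_filter; apply: (@uniq_leq_size _ [:: p; qa; qb]).
  by rewrite /= !inE !negb_or qab !(eq_sym p) nqap nqbp.
move=> q; rewrite !inE mem_filter => /or3P[]/eqP->; apply/andP; split=> //.
by rewrite /= mem_head.
Qed.

Lemma replacement_disjoint_avoiding r q : r \in [:: w :: p; S] ->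
  q \in P -> ~~ has (mem S) q -> edge_disjoint r q.
Proof.
move=> rR qP q_noS f.
have f_q (f' : {set T}) y : y \in f' -> y \in S -> f' \notin pedges q.
  move=> yf yS; apply: contra q_noS => fq; apply/hasP; exists y => //.
  exact: mem_pedges fq yf.
move: rR; rewrite !inE => /orP[]/eqP->.
  rewrite pedges_cons2 inE => /predU1P[-> | fp].
    by apply: (f_q _ u); rewrite ?set22 ?mem_head.
  apply: path_partition_disjoint PP pP qP _ _ fp.
  by apply: contraNneq q_noS => <-; rewrite /= mem_head.
rewrite !pedges_cons2 !inE => /orP[]/eqP->; apply: (f_q _ v);
  by rewrite ?set21 ?set22 ?inE ?eqxx ?orbT.
Qed.

Lemma replacement_cover q f : q \in P -> has (mem S) q -> f \in pedges q ->
  exists2 r, r \in [:: w :: p; S] & f \in pedges r.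
Proof.
move=> qP qS fq; case: (eqVneq q p) => [qp | nqp].
  by exists (w :: p); rewrite ?mem_head // pedges_cons2 inE -qp fq orbT.
have q_S := path_meeting_triangle_sub qP nqp qS.
case: q qP nqp qS fq q_S (path_partition_gpath PP qP) => [|h t] //.
move=> qP _ _ fq q_S /and3P[_ _ ht].
have [y [z [fyz gyz]]] := mem_pedges_rel ht fq; subst f.
have yz_S y' : y' \in [set y; z] -> y' \in S.
  by move=> yf; apply: q_S; apply: mem_pedges fq yf.
have nyz : y != z by apply: contraTneq gyz => ->; rewrite gi.
have := triangle_edge_cases (yz_S _ (set21 y z)) (yz_S _ (set22 y z)) nyz.
rewrite pedges_cons2 inE => /predU1P[-> | yzS].
  by exists (w :: p); rewrite ?mem_head // pedges_cons2 mem_head.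
by exists S; rewrite // !inE eqxx orbT.
Qed.

Lemma bull_path_exchange :
  is_path_partition g [:: w :: p, S & filter (predC (has (mem S))) P].
Proof.
apply: (path_partition_exchange (R := [:: w :: p; S])) => //.
- by move=> r; rewrite !inE => /orP[]/eqP->; [exact: extended_path_gpath | exact: triangle_gpath].
- by rewrite /= inE eqseq_cons eq_sym (negbTE nuw).
- move=> r1 r2; rewrite !inE => /orP[]/eqP-> /orP[]/eqP->; rewrite ?eqxx // => _.
    exact: extended_path_triangle_disjoint.
  exact/edge_disjoint_sym/extended_path_triangle_disjoint.
- by move=> r q rR qP; apply: replacement_disjoint_avoiding.
- by move=> q f qP /negbNE; apply: replacement_cover.
Qed.

Lemma bull_path_partition_smaller :
  exists2 Q, is_path_partition g Q & size Q < size P.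
Proof.
exists [:: w :: p, S & filter (predC (has (mem S))) P]; first exact: bull_path_exchange.
rewrite /= size_filter -(count_predC (has (mem S)) P) addnC -[X in X < _]addn2.
by rewrite ltn_add2l count_paths_meeting_triangle.
Qed.

End BullPath.

Theorem lemma10 (T : finType) (g : rel T) :
  symmetric g -> irreflexive g -> nice g ->
  forall P : seq (seq T), min_path_partition g P ->
  forall p, p \in P -> (exists2 x, x \in p & 4 <= deg g x) ->
  bull_free_path g p.
Proof.
move=> gs gi _ P [PP Pmin] [|u p'] // pP [x xp dx] /= buv.
have /and3P[_ p'_size _] := path_partition_gpath PP pP.
case/lastP: p' => [|I v] in p'_size pP xp buv *; first by [].
rewrite last_rcons in buv.
have [w [[nuv nuw nvw] [guv guw gvw] [du dv dw]]] := bull_pair_triangle gs buv.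
have [Q QP ltQP] := bull_path_partition_smaller gs gi nuv nuw nvw guv guw gvw du dv dw
  (path_partition_gpath PP pP) xp dx PP pP.
by have := Pmin Q QP; rewrite leqNgt ltQP.
Qed.
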